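(* Let $p$ be prime and $H\le\mathrm{S}_n$ be in $\mathfrak{InP}(\mathrm{C}_p)$, let $\gamma$ be as in the context, and let $M$ be a generator matrix of $\gamma(H)$. For orbit indices $i,j$, let $a_i$ and $a_j$ be the first non-zero entries of the columns $M_{*,i}$ and $M_{*,j}$ respectively. Then $\Omega_i\equiv_H\Omega_j$ if and only if $a_i^{-1}M_{*,i}=a_j^{-1}M_{*,j}$.
   Context: $H\le\mathrm{S}_{n}$, $n=pk$, has orbits $\Omega_1,\dots,\Omega_k$ of size $p$ with each $G_i:=H|_{\Omega_i}$ cyclic of order $p$; $G=G_1\times\dots\times G_k$, $g_1$ generates $G_1$, $g_i$ is the conjugate of $g_1$ by the involution swapping $\Omega_1$ and $\Omega_i$ via a bijection witnessing a permutation isomorphism from $G_1$ to $G_i$, and $\gamma:G\to\mathbb{F}_p^k$ is $\gamma(g_1^{r_1}\cdots g_k^{r_k})=(r_1,\dots,r_k)$. A generator matrix of $\gamma(H)$ is a matrix whose rows form a basis of $\gamma(H)$. $\Omega_i\equiv_H\Omega_j$ means there is a bijection $\psi:\Omega_i\to\Omega_j$ with $\psi(\delta^h)=\psi(\delta)^h$ for all $h\in H$, $\delta\in\Omega_i$. *)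

From mathcomp Require Import all_boot all_order all_algebra all_fingroup all_solvable.
Set Implicit Arguments. Unset Strict Implicit. Unset Printing Implicit Defensive.
Import GRing.Theory.

(* Restriction (transitive constituent) H|_A of a permutation group H to an
   H-invariant set A, realised as a group of permutations of 'I_n supported on A. *)
Definition constituent (n : nat) (H : {group {perm 'I_n}}) (A : {set 'I_n})
  : {set {perm 'I_n}} := (restr_perm A @* H)%g.

Definition orbit_equiv (n : nat) (H : {group {perm 'I_n}}) (A B : {set 'I_n}) : Prop :=
  exists psi : 'I_n -> 'I_n,
    [/\ {in A &, injective psi}, psi @: A = B &
        forall h, h \in H -> {in A, forall d, psi (h d) = h (psi d)}].

(* gamma(H) = { gamma(h) | h in H } where gamma (g_1^r_1 ... g_k^r_k) = (r_1,...,r_k);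
   equivalently the set of r with g_1^r_1 ... g_k^r_k in H. *)
Definition gammaH (p n k : nat) (H : {group {perm 'I_n}}) (g : 'I_k -> {perm 'I_n})
  : {set 'rV['F_p]_k} :=
  [set r : 'rV['F_p]_k | (\prod_(i < k) (g i ^+ (nat_of_ord (r ord0 i))))%g \in H].

(* first non-zero entry of a column vector (0 if the column is zero) *)
Definition first_nz (F : fieldType) (m : nat) (c : 'cV[F]_m) : F :=
  head 0%R [seq x <- [seq c r ord0 | r <- enum 'I_m] | x != 0%R].

(* Every h in H is g_1^r_1 ... g_k^r_k for some r in gamma(H), and since each
   G_l = <g_l> has prime order p, h fixes Omega_l pointwise iff r_l = 0.  So the
   columns i and j of M are proportional (equivalently, have equal normalisations)
   iff every vector of the row space gamma(H) vanishes at i exactly when it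
   vanishes at j, iff H has the same pointwise stabiliser on Omega_i and Omega_j.
   An abelian transitive constituent acts regularly, so the stabiliser of a point
   of Omega_l is this pointwise stabiliser; and two orbits are H-equivalent iff
   they contain points with equal stabilisers. *)

From mathcomp Require Import all_boot all_order all_algebra all_fingroup all_solvable.
Import GRing.Theory.

Set Implicit Arguments. Unset Strict Implicit. Unset Printing Implicit Defensive.

Section FirstNonzero.
Variables (F : fieldType) (m : nat).
Local Open Scope ring_scope.
Implicit Types (c d : 'cV[F]_m) (a : F).

Lemma head_filter_neq0 (s : seq F) :
  (head 0 [seq x <- s | x != 0] == 0) = all (eq_op^~ 0) s.
Proof.
elim: s => [|x s IH] /=; first by rewrite eqxx.
by have [-> | x0] := eqVneq x 0; rewrite ?eqxx //= (negbTE x0).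
Qed.

Lemma first_nz_eq0 c : (first_nz c == 0) = (c == 0).
Proof.
rewrite /first_nz head_filter_neq0 all_map; apply/allP/eqP => [c0 | -> r _].
  by apply/matrixP => r j; rewrite (ord1 j) mxE; apply/eqP/c0; rewrite mem_enum.
by rewrite /= mxE.
Qed.

Lemma first_nzZ a c : first_nz (a *: c) = a * first_nz c.
Proof.
have [-> | a0] := eqVneq a 0.
  by rewrite scale0r mul0r; apply/eqP; rewrite first_nz_eq0.
rewrite /first_nz (eq_map (fun r => mxE _ _ r 0)) (map_comp ( *%R a)) filter_map.
rewrite (eq_filter (a2 := fun x => x != 0)); last first.
  by move=> x; rewrite /= mulf_eq0 (negbTE a0).
by case: [seq _ <- _ | _] => [|x s] /=; rewrite ?mulr0.
Qed.

Lemma first_nz_scale_normal a c : a != 0 ->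
  (first_nz (a *: c))^-1 *: (a *: c) = (first_nz c)^-1 *: c.
Proof. by move=> a0; rewrite first_nzZ scalerA invfM mulrAC mulVf // mul1r. Qed.

Lemma first_nz_normal_eqP c d :
  (first_nz c)^-1 *: c = (first_nz d)^-1 *: d <-> exists2 a, a != 0 & d = a *: c.
Proof.
split=> [cd | [a a0 ->]]; last by rewrite first_nz_scale_normal.
have nz_normal (e : 'cV[F]_m) : ((first_nz e)^-1 *: e == 0) = (e == 0).
  by rewrite scaler_eq0 invr_eq0 first_nz_eq0 orbb.
have [c0 | c0] := eqVneq c 0.
  exists 1; rewrite ?oner_eq0 // c0 scaler0; apply/eqP.
  by rewrite -nz_normal -cd c0 scaler0.
have d0 : d != 0 by rewrite -nz_normal -cd nz_normal.
exists (first_nz d / first_nz c); first by rewrite mulf_neq0 ?invr_eq0 ?first_nz_eq0.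
by rewrite -scalerA cd scalerA mulfV ?scale1r ?first_nz_eq0.
Qed.

End FirstNonzero.

Section ColumnAnnihilators.
Variables (F : fieldType) (m : nat).
Local Open Scope ring_scope.
Implicit Types (c d : 'cV[F]_m).

Lemma mx11_eq0 (x : 'M[F]_1) : (x == 0) = (x 0 0 == 0).
Proof.
apply/eqP/eqP => [-> | x0]; first by rewrite mxE.
by apply/matrixP => i j; rewrite !ord1 x0 mxE.
Qed.

Lemma scaled_col_annP c d :
  (exists2 a, a != 0 & d = a *: c) <->
  (forall u : 'rV[F]_m, (u *m c == 0) = (u *m d == 0)).
Proof.
split=> [[a a0 ->] u | ann]; first by rewrite -scalemxAr scaler_eq0 (negbTE a0).
have ann_entry r : (c r 0 == 0) = (d r 0 == 0).
  by have := ann (delta_mx 0 r); rewrite !mx11_eq0 -!rowE !mxE.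
have [c0 | c0] := eqVneq c 0.
  exists 1; rewrite ?oner_eq0 // c0 scaler0; apply/matrixP => r j.
  by rewrite (ord1 j) [RHS]mxE; apply/eqP; rewrite -ann_entry c0 mxE.
have [r0 cr0] : exists r, c r 0 != 0.
  apply/existsP; apply: contraNT c0 => /existsPn c0; apply/eqP/matrixP => r j.
  by rewrite (ord1 j) mxE; apply/eqP/negbNE/c0.
have d_entry r : d r 0 = c r 0 / c r0 0 * d r0 0.
  pose u : 'rV_m := delta_mx 0 r - (c r 0 / c r0 0) *: delta_mx 0 r0.
  have uE (e : 'cV_m) : (u *m e) 0 0 = e r 0 - c r 0 / c r0 0 * e r0 0.
    by rewrite mulmxBl -scalemxAl -!rowE !mxE.
  by have := ann u; rewrite !mx11_eq0 !uE divfK // subrr eqxx subr_eq0 => /esym/eqP.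
exists (d r0 0 / c r0 0); first by rewrite mulf_neq0 ?invr_eq0 -?ann_entry.
apply/matrixP => r j; rewrite (ord1 j) [RHS]mxE d_entry.
by rewrite mulrAC [RHS]mulrAC [d r0 0 * _]mulrC.
Qed.

End ColumnAnnihilators.

Section RowSpaceColumns.
Variables (F : fieldType) (m k : nat) (M : 'M[F]_(m, k)).
Local Open Scope ring_scope.

Lemma mulmx_col_eq0 (u : 'rV[F]_m) i : (u *m col i M == 0) = ((u *m M) 0 i == 0).
Proof. by rewrite mx11_eq0 colE mulmxA -colE mxE. Qed.

Lemma first_nz_normal_colP i j :
  (first_nz (col i M))^-1 *: col i M = (first_nz (col j M))^-1 *: col j M <->
  (forall v : 'rV[F]_k, (v <= M)%MS -> (v 0 i == 0) = (v 0 j == 0)).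
Proof.
apply: iff_trans (first_nz_normal_eqP _ _) _; apply: iff_trans (scaled_col_annP _ _) _.
split=> [ann v /submxP[u ->] | ann u]; first by rewrite -!mulmx_col_eq0.
by rewrite !mulmx_col_eq0 ann ?submxMl.
Qed.

End RowSpaceColumns.

Section PermSupport.
Variable T : finType.
Local Open Scope group_scope.

Lemma perm_on_astab (A : {set T}) (s : {perm T}) :
  perm_on A s -> (s \in 'C(A | 'P)) = (s == 1).
Proof.
move=> sA; apply/astabP/eqP => [fix_s | -> x _]; last by rewrite /= apermE perm1.
apply/permP=> x; rewrite perm1; have [/fix_s // | xA] := boolP (x \in A).
exact: out_perm sA xA.
Qed.

Lemma prod_perm_on_disjoint (I : eqType) (s : seq I)
    (f : I -> {perm T}) (A : {set T}) l :
  uniq s -> perm_on A (f l) -> (forall l', l' != l -> {in A, f l' =1 id}) ->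
  {in A, forall x, (\prod_(l' <- s) f l') x = if l \in s then f l x else x}.
Proof.
move=> + fA fix_f; elim: s => [|l' s IH] /=; first by move=> _ x _; rewrite big_nil perm1.
case/andP=> l's s_uniq x Ax; rewrite big_cons permM in_cons.
have [eq_l'l | l'l] := eqVneq l' l; last by rewrite fix_f // IH.
by subst l'; rewrite IH ?(perm_closed _ fA) // (negbTE l's).
Qed.

End PermSupport.

Section OrbitEquivalence.
Variables (n : nat) (H : {group {perm 'I_n}}).
Implicit Types (A B : {set 'I_n}) (a b : 'I_n) (h : {perm 'I_n}).
Local Open Scope group_scope.

Lemma perm_acts_orbit a : [acts H, on orbit 'P H a | 'P].
Proof. exact/acts_orbit/subsetT. Qed.

Lemma constituent_perm_on A s : s \in constituent H A -> perm_on A s.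
Proof. by case/morphimP=> h _ _ ->; apply: restr_perm_on. Qed.

Lemma orbit_equiv_astab A B :
  [acts H, on A | 'P] -> orbit_equiv H A B -> 'C_H(A | 'P) = 'C_H(B | 'P).
Proof.
move=> actsA [psi [inj_psi psiA psiH]]; apply/setP=> h.
apply/setIP/setIP=> -[hH /astabP/= fix_h]; split=> //; apply/astabP=> x.
  rewrite -psiA => /imsetP[y Ay ->] /=.
  by rewrite apermE -psiH //; congr psi; apply: fix_h.
move=> Ax /=; apply: inj_psi => //.
  by rewrite apermE -[h x]apermE (actsP actsA).
by rewrite psiH //; apply: fix_h; rewrite -psiA imset_f.
Qed.

Lemma astab1_sub_act_eq a b h h' :
  'C_H[a | 'P] \subset 'C_H[b | 'P] ->
  h \in H -> h' \in H -> h a = h' a -> h b = h' b.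
Proof.
move=> sab hH h'H ha; have hh'H : h * h'^-1 \in H by rewrite groupM ?groupV.
have : h * h'^-1 \in 'C_H[a | 'P].
  by rewrite inE hh'H; apply/astab1P; rewrite /= apermE permM ha permK.
move/(subsetP sab)/setIP=> [_ /astab1P].
by rewrite /= apermE permM => /(canRL (permKV h')).
Qed.

Lemma astab1_orbit_equiv a b :
  'C_H[a | 'P] = 'C_H[b | 'P] -> orbit_equiv H (orbit 'P H a) (orbit 'P H b).
Proof.
(* psi (h a) := h b is well defined because a and b have the same stabiliser. *)
move=> stab_ab; pose psi x := if [pick h in H | h a == x] is Some h then h b else x.
have psiE h : h \in H -> psi (h a) = h b.
  move=> hH; rewrite /psi; case: pickP => [h0 /andP[h0H /eqP h0a] | /(_ h)].
    by apply: astab1_sub_act_eq h0a; rewrite ?stab_ab.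
  by rewrite hH eqxx.
exists psi; split.
- move=> _ _ /orbitP[h hH <-] /orbitP[h' h'H <-] /=; rewrite !apermE !psiE //.
  by apply: astab1_sub_act_eq; rewrite ?stab_ab.
- rewrite !orbitE -imset_comp; apply: eq_in_imset => h hH /=.
  by rewrite !apermE psiE.
- move=> h hH _ /orbitP[h0 h0H <-] /=; rewrite !apermE -permM !psiE ?groupM //.
  by rewrite permM.
Qed.

Lemma abelian_constituent_astab1 a :
  abelian (constituent H (orbit 'P H a)) -> 'C_H[a | 'P] = 'C_H(orbit 'P H a | 'P).
Proof.
set A := orbit 'P H a => abA; have nAH := perm_acts_orbit a.
apply/eqP; rewrite eqEsubset andbC setIS ?astabS ?sub1set ?orbit_refl //=.
apply/subsetP=> h /setIP[hH /astab1P/=]; rewrite apermE => ha.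
rewrite inE hH; apply/astabP=> _ /orbitP[h' h'H <-] /=.
have restrA g : g \in H -> restr_perm A g \in constituent H A.
  by move=> gH; apply: mem_morphim; first exact: (subsetP nAH).
have restrAE g x : g \in H -> x \in A -> restr_perm A g x = g x.
  by move=> gH; apply: restr_permE; apply: (subsetP nAH).
have h'a_A : h' a \in A by rewrite -[h' a]apermE mem_orbit.
rewrite !apermE -(restrAE h) // -(restrAE h') ?orbit_refl // -permM.
rewrite (centsP abA _ (restrA h' h'H) _ (restrA h hH)) permM.
by rewrite !restrAE ?ha ?orbit_refl.
Qed.

Lemma abelian_orbit_equivP a b :
  abelian (constituent H (orbit 'P H a)) -> abelian (constituent H (orbit 'P H b)) ->
  orbit_equiv H (orbit 'P H a) (orbit 'P H b) <->
  'C_H(orbit 'P H a | 'P) = 'C_H(orbit 'P H b | 'P).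
Proof.
move=> abA abB; split=> [|stabAB]; first exact/orbit_equiv_astab/perm_acts_orbit.
by apply: astab1_orbit_equiv; rewrite !abelian_constituent_astab1.
Qed.

End OrbitEquivalence.

Lemma Fp_dvdn_eq0 p (e : 'F_p) : prime p -> (p %| e)%N = (e == 0%R).
Proof. by move=> p_pr; rewrite /dvdn modn_small // -{2}(Fp_cast p_pr) ltn_ord. Qed.

(* [gammaH p H g] unfolds to [[set r | prod_expg g r \in H]]. *)
Definition prod_expg (p n k : nat) (g : 'I_k -> {perm 'I_n}) (r : 'rV['F_p]_k) :=
  (\prod_(i < k) g i ^+ r ord0 i)%g.

Section CyclicConstituents.
Local Open Scope group_scope.
Variables (p n k : nat) (H : {group {perm 'I_n}}).
Variables (Omega : 'I_k -> {set 'I_n}) (g : 'I_k -> {perm 'I_n}).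
Hypotheses (p_pr : prime p) (Omega_inj : injective Omega).
Hypothesis orbitsE : [set orbit 'P H x | x in [set: 'I_n]] = Omega @: [set: 'I_k].
Hypothesis constituentE : forall l, constituent H (Omega l) = <[g l]>.
Hypothesis order_g : forall l, #[g l] = p.
Implicit Types (l : 'I_k) (r : 'rV['F_p]_k) (h : {perm 'I_n}).

Lemma Omega_orbit l : exists x, Omega l = orbit 'P H x.
Proof.
have : Omega l \in Omega @: [set: 'I_k] by apply: imset_f.
by rewrite -orbitsE => /imsetP[x _ ->]; exists x.
Qed.

Lemma mem_Omega x : exists l, x \in Omega l.
Proof.
have : orbit 'P H x \in Omega @: [set: 'I_k] by rewrite -orbitsE imset_f.
by case/imsetP=> l _ xE; exists l; rewrite -xE orbit_refl.
Qed.

Lemma Omega_disjoint l l' x : x \in Omega l -> x \in Omega l' -> l = l'.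
Proof.
have [[y Ey] [y' Ey']] := (Omega_orbit l, Omega_orbit l').
rewrite Ey Ey' => /orbit_eqP xy /orbit_eqP xy'.
by apply: Omega_inj; rewrite Ey Ey' -xy -xy'.
Qed.

Lemma acts_Omega l : [acts H, on Omega l | 'P].
Proof. by have [x ->] := Omega_orbit l; apply: perm_acts_orbit. Qed.

Lemma expg_perm_on l e : perm_on (Omega l) (g l ^+ e).
Proof. by apply: (@constituent_perm_on _ H); rewrite constituentE mem_cycle. Qed.

Lemma prod_expg_Omega r l : {in Omega l, prod_expg g r =1 g l ^+ r ord0 l}.
Proof.
move=> x Ox; rewrite /prod_expg.
rewrite (@prod_perm_on_disjoint _ _ _ (fun i => g i ^+ r ord0 i) _ l (index_enum_uniq _)
  (expg_perm_on _ _)) ?mem_index_enum //.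
move=> l' l'l y Oy; apply: out_perm (expg_perm_on _ _) _.
by apply: contra l'l => O'y; rewrite (Omega_disjoint O'y Oy).
Qed.

Lemma prod_expg_astab r l : (prod_expg g r \in 'C(Omega l | 'P)) = (r ord0 l == 0%R).
Proof.
transitivity (g l ^+ r ord0 l \in 'C(Omega l | 'P)).
  by apply/astabP/astabP=> fix_r x Ox; move: (fix_r x Ox);
    rewrite /= !apermE (prod_expg_Omega _ Ox).
by rewrite perm_on_astab ?expg_perm_on // -order_dvdn order_g Fp_dvdn_eq0.
Qed.

Lemma prod_expg_onto h : h \in H -> exists r, prod_expg g r = h.
Proof.
move=> hH; have nOH l := subsetP (acts_Omega l) h hH.
have exps l : exists e : 'F_p, restr_perm (Omega l) h = g l ^+ e.
  have /cycleP[e ->] : restr_perm (Omega l) h \in <[g l]>.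
    by rewrite -constituentE mem_morphim ?nOH.
  by exists (inZp e); rewrite /= Fp_cast // -(order_g l) expg_mod_order.
have [f fE] := fin_all_exists exps; exists (\row_l f l)%R; apply/permP=> x.
have [l Ox] := mem_Omega x.
by rewrite (prod_expg_Omega _ Ox) mxE -fE restr_permE ?nOH.
Qed.

Lemma gammaH_zero_astabP i j :
  (forall r, r \in gammaH p H g -> (r ord0 i == 0%R) = (r ord0 j == 0%R)) <->
  'C_H(Omega i | 'P) = 'C_H(Omega j | 'P).
Proof.
split=> [zeroE | astabE r].
  apply/setP=> h; rewrite in_setI [in RHS]in_setI; apply: andb_id2l => hH.
  have [r rE] := prod_expg_onto hH; rewrite -rE !prod_expg_astab zeroE //.
  by rewrite inE -/(prod_expg g r) rE.
rewrite inE -/(prod_expg g r) => rH; rewrite -!prod_expg_astab.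
by move/setP/(_ (prod_expg g r)): astabE; rewrite in_setI [in RHS]in_setI rH.
Qed.

End CyclicConstituents.

Theorem lemma5p2 (p n k : nat) (H : {group {perm 'I_n}})
  (Omega : 'I_k -> {set 'I_n}) (i0 : 'I_k) (g1 : {perm 'I_n})
  (t : 'I_k -> {perm 'I_n}) (m : nat) (M : 'M['F_p]_(m, k)) :
  prime p ->
  n = (p * k)%N ->
  (* Omega_1, ..., Omega_k are exactly the (distinct) orbits of H, of size p *)
  injective Omega ->
  [set orbit 'P H x | x in [set: 'I_n]] = Omega @: [set: 'I_k] ->
  (forall i, #|Omega i| = p) ->
  (* each G_i := H|_{Omega_i} is cyclic of order p *)
  (forall i, cyclic (constituent H (Omega i)) /\ #|constituent H (Omega i)| = p) ->
  (* g_1 generates G_1 (Omega_1 is the orbit with index i0) *)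
  generator (constituent H (Omega i0)) g1 ->
  (* t i is the involution swapping Omega_1 and Omega_i via a bijection that is a
     permutation isomorphism from G_1 to G_i (and t i0 = 1) *)
  t i0 = 1%g ->
  (forall i, i != i0 ->
     [/\ (t i * t i = 1)%g,
         {in Omega i0, forall x, t i x \in Omega i},
         (forall x, x \notin Omega i0 -> x \notin Omega i -> t i x = x) &
         (constituent H (Omega i0) :^ t i)%g = constituent H (Omega i)]) ->
  (* M is a generator matrix of gamma(H), with g_i := g_1 ^ t_i *)
  row_free M ->
  (forall v : 'rV['F_p]_k,
      (v <= M)%MS = (v \in gammaH p H (fun i => (g1 ^ t i)%g))) ->
  forall i j : 'I_k,
    orbit_equiv H (Omega i) (Omega j) <->
    ((first_nz (col i M))^-1 *: col i M = (first_nz (col j M))^-1 *: col j M)%R.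
Proof.
move=> p_pr _ Omega_inj orbitsE _ cycC gen1 t0 conj_t _ rowM i j.
pose g l := (g1 ^ t l)%g.
have constituentE l : constituent H (Omega l) = <[g l]>%g.
  have [-> | li0] := eqVneq l i0; first by rewrite /g t0 conjg1; apply/eqP.
  by have [_ _ _ <-] := conj_t l li0; rewrite (eqP gen1) cycleJ.
have order_g l : #[g l]%g = p by rewrite /order -constituentE; case: (cycC l).
have rowM_gammaH :
    (forall v : 'rV_k, (v <= M)%MS -> (v ord0 i == 0) = (v ord0 j == 0))%R <->
    (forall r, r \in gammaH p H g -> (r ord0 i == 0) = (r ord0 j == 0))%R.
  by split=> zeroE v; [rewrite -rowM | rewrite rowM]; apply: zeroE.
apply: (iff_trans _ (iff_sym (first_nz_normal_colP M i j))).
apply: (iff_trans _ (iff_sym rowM_gammaH)).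
have astabE := gammaH_zero_astabP p_pr Omega_inj orbitsE constituentE order_g i j.
apply: (iff_trans _ (iff_sym astabE)).
have [[a Ea] [b Eb]] := (Omega_orbit orbitsE i, Omega_orbit orbitsE j).
by rewrite Ea Eb; apply: abelian_orbit_equivP; rewrite -?Ea -?Eb constituentE cycle_abelian.
Qed.
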